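(* Suppose one of the following holds: (i) $\mathcal{X}$ is compact and the state-space system defined by $f$ has the echo state property; or (ii) $f$ is a contraction in the first entry with a rate $c\in(0,|\mathbf{w}|^{-1})$, that is, $d_{\mathcal{X}}(f(x_1,u),f(x_2,u))\le c\,d_{\mathcal{X}}(x_1,x_2)$ for all $x_1,x_2\in\mathcal{X}$ and $u\in\mathcal{U}$. Then the associated filter $U_f$ exists as a map $U_f:\underline{\mathcal{U}}\to\underline{\mathcal{X}}$ and is continuous.
   Context: $\mathbb{Z}_-=\{\dots,-2,-1\}$; $\mathbb{N}=\{1,2,\dots\}$. $\mathcal{Z},\mathcal{U}$ Polish; $(\mathcal{X},d_{\mathcal{X}})$ Polish with complete metric; $f:\mathcal{X}\times\mathcal{U}\to\mathcal{X}$ continuous. $\underline{\mathcal{Z}}=\mathcal{Z}^{\mathbb{Z}_-}$ (product topology); $V:\underline{\mathcal{Z}}\to\mathcal{U}^{\mathbb{Z}_-}$ continuous and causal; $\underline{\mathcal{U}}=V(\underline{\mathcal{Z}})$ Polish with a metric $d_{\underline{\mathcal{U}}}$ inducing its topology. $\mathbf{w}=(w_t)_{t\le-1}\subseteq(0,1)$ monotone, summing to $1$, $|\mathbf{w}|:=\sup_{n\in\mathbb{N}}(\sup_tw_t/w_{t-n})^{1/n}<\infty$. Fix $x_*\in\mathcal{X}$. $\underline{\mathcal{X}}=\{\mathbf{x}\in\mathcal{X}^{\mathbb{Z}_-}:\sum_tw_td_{\mathcal{X}}(x_t,x_* )<\infty\}$ with metric $d_{\underline{\mathcal{X}}}(\mathbf{x}^1,\mathbf{x}^2)=\sum_tw_td_{\mathcal{X}}(x^1_t,x^2_t)$.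 $F(\mathbf{x},\mathbf{u})_t=f(x_{t-1},u_t)$ for $\mathbf{x}\in\mathcal{X}^{\mathbb{Z}_-},\mathbf{u}\in\mathcal{U}^{\mathbb{Z}_-}$; standing assumption: $F(\underline{\mathcal{X}}\times\underline{\mathcal{U}})\subseteq\underline{\mathcal{X}}$ and $F:\underline{\mathcal{X}}\times\underline{\mathcal{U}}\to\underline{\mathcal{X}}$ is continuous. Echo state property: for every $\mathbf{u}\in\mathcal{U}^{\mathbb{Z}_-}$ there is a unique $\mathbf{x}\in\mathcal{X}^{\mathbb{Z}_-}$ with $\mathbf{x}=F(\mathbf{x},\mathbf{u})$; the associated filter $U_f$ maps $\mathbf{u}$ to this unique solution $\mathbf{x}$ (on whichever set of inputs the solution exists and is unique; in case (ii) the conclusion includes that for each $\mathbf{u}\in\underline{\mathcal{U}}$ there is a unique solution $\mathbf{x}\in\underline{\mathcal{X}}$). *)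

From HB Require Import structures.
From mathcomp Require Import all_boot all_order all_algebra.
From mathcomp Require Import all_classical all_reals all_analysis.
Set Implicit Arguments. Unset Strict Implicit. Unset Printing Implicit Defensive.
Import Order.TTheory GRing.Theory Num.Theory.
Import numFieldNormedType.Exports.
Local Open Scope classical_set_scope.
Local Open Scope ring_scope.

(* Time index convention: Z_- = {..,-2,-1} is encoded by nat, with
   t = -(n+1) <-> n.  Hence x_{t-1} <-> x (n.+1) and "s <= t" <-> "n <= m". *)

Section Defs.
Variable R : realType.

Definition metric_on (T : Type) (A : set T) (d : T -> T -> R) :=
  forall x y z, A x -> A y -> A z ->
    [/\ 0 <= d x y, d x y = 0 <-> x = y, d x y = d y x
      & d x z <= d x y + d y z].

Definition induces_on (T : topologicalType) (A : set T) (d : T -> T -> R) :=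
  forall x, A x -> forall B : set T,
    ((exists2 N, nbhs x N & N `&` A `<=` B) <->
     (exists2 e : R, 0 < e & [set y | A y /\ d x y < e] `<=` B)).

Definition complete_on (T : Type) (A : set T) (d : T -> T -> R) :=
  forall s : nat -> T, (forall n, A (s n)) ->
    (forall e : R, 0 < e -> exists N : nat, forall m n,
        (N <= m)%N -> (N <= n)%N -> d (s m) (s n) < e) ->
    exists2 l, A l & (fun n => d (s n) l) @ \oo --> (0 : R).

Definition separable_on (T : topologicalType) (A : set T) :=
  exists2 D : set T, D `<=` A /\ countable D &
    forall x, A x -> forall N, nbhs x N -> exists y, D y /\ N y.

Definition polish_on (T : topologicalType) (A : set T) :=
  exists d : T -> T -> R,
    [/\ metric_on A d, induces_on A d, complete_on A d & separable_on A].

Definition polish (T : topologicalType) := polish_on [set: T].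

(* |w| = sup_{n >= 1} (sup_t w_t / w_{t-n})^{1/n} *)
Definition wratios (w : nat -> R) (n : nat) : set R :=
  [set w k / w (k + n)%N | k in [set: nat]].
Definition wroots (w : nat -> R) : set R :=
  [set (sup (wratios w n)) `^ (n%:R^-1) | n in [set n : nat | (0 < n)%N]].
Definition wnorm (w : nat -> R) : R := sup (wroots w).
Definition wnorm_finite (w : nat -> R) :=
  (forall n, (0 < n)%N -> has_ubound (wratios w n)) /\ has_ubound (wroots w).

Definition in_Xbar (X : Type) (w : nat -> R) (d : X -> X -> R) (xs : X)
  (x : nat -> X) :=
  exists l : R, series (fun n => w n * d (x n) xs) @ \oo --> l.

Definition dXbar (X : Type) (w : nat -> R) (d : X -> X -> R)
  (x1 x2 : nat -> X) : R :=
  limn (series (fun n => w n * d (x1 n) (x2 n))).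

End Defs.

Definition Fmap (X U : Type) (f : X -> U -> X) (x : nat -> X) (u : nat -> U)
  : nat -> X := fun n => f (x n.+1) (u n).

Definition causal (Z U : Type) (V : (nat -> Z) -> (nat -> U)) :=
  forall z z' n, (forall m, (n <= m)%N -> z m = z' m) -> V z n = V z' n.

From HB Require Import structures.
From mathcomp Require Import all_boot all_order all_algebra.
From mathcomp Require Import all_classical all_reals all_analysis.
From mathcomp Require Import ring lra.
Import Order.TTheory GRing.Theory Num.Theory.
Import numFieldNormedType.Exports.
Local Open Scope classical_set_scope.
Local Open Scope ring_scope.

(* Under (ii), x |-> F(x, u) is a contraction of the weighted space with rate
   c |w| < 1: shifting a sequence by one step multiplies its weighted distance
   by at most |w|.  Its iterates converge coordinatewise in the complete space
   X, which yields U_f(u), and the contraction estimate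
   (1 - c |w|) dbar(U_f u, U_f u0) <= dbar(F(U_f u0, u), F(U_f u0, u0))
   turns continuity of F in u into continuity of U_f.
   Under (i), U_f is continuous for the product topology: X^N is compact and
   every cluster point of U_f at u0 solves the equation driven by u0, hence is
   U_f(u0).  As X is compact, d is bounded, and since the weights are summable
   product convergence implies convergence in the weighted metric. *)

Set Implicit Arguments. Unset Strict Implicit.

Lemma series_nondecreasing (R : realType) (a : R^nat) :
  (forall n, 0 <= a n) -> nondecreasing_seq (series a).
Proof.
move=> a_ge0 m n mn; rewrite !seriesEnat /=.
exact: (@nondecreasing_series R a xpredT 0%N (fun k _ _ => a_ge0 k)).
Qed.

Lemma nonneg_series_bounded (R : realType) (a : R^nat) B :
  (forall n, 0 <= a n) -> (forall N, series a N <= B) ->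
  cvgn (series a) /\ limn (series a) <= B.
Proof.
move=> a_ge0 a_le; have a_cvg : cvgn (series a).
  apply: nondecreasing_is_cvgn; first exact: series_nondecreasing.
  by exists B => _ [n _ <-].
by split => //; apply: limr_le => //; exact: nearW.
Qed.

Lemma nonneg_series_le_lim (R : realType) (a : R^nat) N :
  (forall n, 0 <= a n) -> cvgn (series a) -> series a N <= limn (series a).
Proof.
by move=> a_ge0 a_cvg; apply: nondecreasing_cvgn_le => //; exact: series_nondecreasing.
Qed.

Lemma le0_geometric (R : realType) (l K a : R) :
  0 <= l < 1 -> (forall k, a <= K * l ^+ k) -> a <= 0.
Proof.
move=> /andP[l_ge0 l_lt1] a_le.
have : (fun k => K * l ^+ k) @ \oo --> K * 0.
  by apply: cvgMr; apply: cvg_expr; rewrite ger0_norm.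
by rewrite mulr0 => /cvgr_to_ge; apply; exact: nearW.
Qed.

Lemma geometric_cauchy (R : realType) (T : Type) (dd : T -> T -> R)
    (s : nat -> T) A l :
  0 <= l < 1 -> 0 <= A ->
  (forall i j k, dd (s i) (s k) <= dd (s i) (s j) + dd (s j) (s k)) ->
  (forall i, dd (s i) (s i.+1) <= A * l ^+ i) ->
  forall k m, (k < m)%N -> dd (s k) (s m) <= A * l ^+ k / (1 - l).
Proof.
move=> /andP[l_ge0 l_lt1] A_ge0 dd_triangle dd_step k m /subnKC <-.
have l1_neq0 : 1 - l != 0 by rewrite subr_eq0 eq_sym lt_eqF.
have partial j :
    dd (s k) (s (k.+1 + j)%N) <= A * (l ^+ k - l ^+ (k.+1 + j)%N) / (1 - l).
  elim: j => [|j IH].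
    rewrite addn0; apply: le_trans (dd_step k) _.
    by rewrite le_eqVlt; apply/orP; left; apply/eqP; rewrite exprS; field.
  rewrite addnS; apply: le_trans (dd_triangle k (k.+1 + j)%N (k.+1 + j).+1) _.
  apply: le_trans (lerD IH (dd_step _)) _.
  move: (k.+1 + j)%N => n.
  by rewrite le_eqVlt; apply/orP; left; apply/eqP; rewrite exprS; field.
apply: le_trans (partial _) _.
rewrite ler_pdivrMr ?subr_gt0 // divfK //; apply: ler_wpM2l => //.
by rewrite lerBlDr lerDl exprn_ge0.
Qed.

Section metric.
Variables (R : realType) (X : Type) (d : X -> X -> R).
Hypothesis dm : metric_on [set: X] d.

Lemma metric_ge0 x y : 0 <= d x y.
Proof. by have [] := @dm x y y I I I. Qed.

Lemma metric_eq0 x y : d x y = 0 <-> x = y.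
Proof. by have [] := @dm x y y I I I. Qed.

Lemma metric_sym x y : d x y = d y x.
Proof. by have [] := @dm x y y I I I. Qed.

Lemma metric_triangle x y z : d x z <= d x y + d y z.
Proof. by have [] := @dm x y z I I I. Qed.

Lemma metric_xx x : d x x = 0.
Proof. exact/metric_eq0. Qed.

Lemma metric_le0 x y : d x y <= 0 -> x = y.
Proof. by move=> dxy_le0; apply/metric_eq0/eqP; rewrite eq_le dxy_le0 metric_ge0. Qed.

Lemma geometric_limit (s : nat -> X) A l :
  complete_on [set: X] d -> 0 <= l < 1 -> 0 <= A ->
  (forall i, d (s i) (s i.+1) <= A * l ^+ i) ->
  exists x, forall k, d (s k) x <= A * l ^+ k / (1 - l).
Proof.
move=> dc l_range A_ge0 s_step; have /andP[l_ge0 l_lt1] := l_range.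
have tail k m : (k <= m)%N -> d (s k) (s m) <= A * l ^+ k / (1 - l).
  rewrite leq_eqVlt => /orP[/eqP <-|]; last first.
    exact: (geometric_cauchy l_range A_ge0 (fun i j k => metric_triangle _ (s j) _)).
  by rewrite metric_xx divr_ge0 ?mulr_ge0 ?exprn_ge0 // subr_ge0 ltW.
have tail_cvg0 : (fun k => A / (1 - l) * l ^+ k) @ \oo --> (0 : R).
  by rewrite -(mulr0 (A / (1 - l))); apply: cvgMr; apply: cvg_expr; rewrite ger0_norm.
have [x _ sx] : exists2 x, [set: X] x & (fun n => d (s n) x) @ \oo --> (0 : R).
  apply: dc => // e e_gt0.
  have [N _ N_tail] := cvgr_lt _ tail_cvg0 _ (divr_gt0 e_gt0 (ltr0Sn _ 1%N)).
  exists N => m n Nm Nn; apply: le_lt_trans (metric_triangle _ (s N) _) _.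
  rewrite metric_sym (splitr e); apply: ltrD.
    by apply: le_lt_trans (tail _ _ Nm) _; rewrite mulrAC; exact: N_tail (leqnn N).
  by apply: le_lt_trans (tail _ _ Nn) _; rewrite mulrAC; exact: N_tail (leqnn N).
exists x => k; have : (fun j => A * l ^+ k / (1 - l) + d (s j) x) @ \oo -->
    A * l ^+ k / (1 - l) + 0 by apply: cvgD => //; exact: cvg_cst.
rewrite addr0 => /cvgr_to_ge; apply; exists k => // j /= kj.
by apply: le_trans (metric_triangle _ (s j) _) _; rewrite lerD2r tail.
Qed.

End metric.

Section weighted_distance.
Variables (R : realType) (X : Type) (w : nat -> R) (d : X -> X -> R).
Hypotheses (dm : metric_on [set: X] d) (w_gt0 : forall n, 0 < w n).

Definition wdist_sum (x y : nat -> X) := series (fun n => w n * d (x n) (y n)).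

Lemma wterm_ge0 (x y : nat -> X) n : 0 <= w n * d (x n) (y n).
Proof. exact: mulr_ge0 (ltW (w_gt0 n)) (metric_ge0 dm _ _). Qed.

Lemma wdist_sum_nondecreasing x y : nondecreasing_seq (wdist_sum x y).
Proof. exact: (series_nondecreasing (wterm_ge0 x y)). Qed.

Lemma wdist_sum_sym x y N : wdist_sum x y N = wdist_sum y x N.
Proof. by apply: eq_bigr => i _; rewrite (metric_sym dm). Qed.

Lemma wdist_sum_triangle x y z N :
  wdist_sum x z N <= wdist_sum x y N + wdist_sum y z N.
Proof.
rewrite /wdist_sum /series /= -big_split /=; apply: ler_sum => i _.
by rewrite -mulrDr (ler_pM2l (w_gt0 i)); exact: metric_triangle.
Qed.

Lemma dXbar_le x y B : (forall N, wdist_sum x y N <= B) -> dXbar w d x y <= B.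
Proof. by move=> /(nonneg_series_bounded (wterm_ge0 x y))[]. Qed.

Lemma dXbar_xx x : dXbar w d x x = 0.
Proof.
rewrite /dXbar; have -> : (fun n => w n * d (x n) (x n)) = fun=> 0.
  by apply: funext => n; rewrite (metric_xx dm) mulr0.
have -> : series (fun=> 0 : R) = fun=> 0.
  by apply: funext => n; rewrite /series /= big1.
exact: lim_cst.
Qed.

Lemma dXbar_sym x y : dXbar w d x y = dXbar w d y x.
Proof.
rewrite /dXbar.
have -> // : (fun n => w n * d (x n) (y n)) = fun n => w n * d (y n) (x n).
by apply: funext => n; rewrite (metric_sym dm).
Qed.

Lemma in_XbarP xs x :
  in_Xbar w d xs x <-> exists B, forall N, wdist_sum x (fun=> xs) N <= B.
Proof.
split=> [[l x_cvg] | [B x_le]].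
  exists l => N; rewrite -(cvg_lim _ x_cvg) //.
  by apply: nonneg_series_le_lim; [exact: wterm_ge0 | apply/cvg_ex; exists l].
have [x_cvg _] := nonneg_series_bounded (wterm_ge0 x (fun=> xs)) x_le.
by exists (limn (wdist_sum x (fun=> xs))).
Qed.

Lemma in_Xbar_cst xs : in_Xbar w d xs (fun=> xs).
Proof.
apply/in_XbarP; exists 0 => N.
by rewrite /wdist_sum /series /= big1 // => i _; rewrite (metric_xx dm) mulr0.
Qed.

Section in_Xbar.
Variables (xs : X) (x y : nat -> X).
Hypotheses (Xx : in_Xbar w d xs x) (Xy : in_Xbar w d xs y).

Lemma wdist_sum_le_dXbar N : wdist_sum x y N <= dXbar w d x y.
Proof.
apply: nonneg_series_le_lim; first exact: wterm_ge0.
move: Xx Xy => /in_XbarP[Bx x_le] /in_XbarP[By y_le].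
have [] // := nonneg_series_bounded (wterm_ge0 x y) (B := Bx + By).
move=> M; apply: le_trans (wdist_sum_triangle _ (fun=> xs) _ _) _.
by rewrite (wdist_sum_sym (fun=> xs)); exact: lerD.
Qed.

Lemma wterm_le_dXbar n : w n * d (x n) (y n) <= dXbar w d x y.
Proof.
apply: le_trans (wdist_sum_le_dXbar n.+1).
by rewrite /wdist_sum seriesSr lerDr sumr_ge0 // => i _; exact: wterm_ge0.
Qed.

Lemma dXbar_ge0 : 0 <= dXbar w d x y.
Proof. exact: le_trans (wterm_ge0 x y 0) (wterm_le_dXbar 0). Qed.

Lemma dXbar_le0 : dXbar w d x y <= 0 -> x = y.
Proof.
move=> dxy_le0; apply: funext => n; apply: (metric_le0 dm).
by rewrite -(pmulr_rle0 _ (w_gt0 n)); exact: le_trans (wterm_le_dXbar n) dxy_le0.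
Qed.

End in_Xbar.

Lemma dXbar_triangle xs x y z : in_Xbar w d xs x -> in_Xbar w d xs y ->
  in_Xbar w d xs z -> dXbar w d x z <= dXbar w d x y + dXbar w d y z.
Proof.
move=> Xx Xy Xz; apply: dXbar_le => N.
apply: le_trans (wdist_sum_triangle x y z N) _.
exact: lerD (wdist_sum_le_dXbar Xx Xy N) (wdist_sum_le_dXbar Xy Xz N).
Qed.

End weighted_distance.

Lemma weight_le_wnorm (R : realType) (w : nat -> R) k :
  (forall n, 0 < w n) -> wnorm_finite w -> w k <= wnorm w * w k.+1.
Proof.
move=> w_gt0 [ratio_ub root_ub].
have ratio_le : w k / w k.+1 <= sup (wratios w 1).
  apply: sup_upper_bound; last by exists k => //; rewrite addn1.
  by split; [exists (w 0%N / w 1%N), 0%N | exact: ratio_ub].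
have sup_ge0 : 0 <= sup (wratios w 1).
  exact: le_trans (divr_ge0 (ltW (w_gt0 k)) (ltW (w_gt0 k.+1))) ratio_le.
have sup_le : sup (wratios w 1) <= wnorm w.
  apply: sup_upper_bound; last by exists 1%N => //; rewrite invr1 powRr1.
  by split => //; exists (sup (wratios w 1) `^ 1^-1), 1%N.
by rewrite -ler_pdivrMr //; exact: le_trans ratio_le sup_le.
Qed.

Lemma weight_ratio_bound_gt0 (R : realType) (w : nat -> R) L :
  (forall n, 0 < w n) -> (forall k, w k <= L * w k.+1) -> 0 < L.
Proof.
move=> w_gt0 w_le; rewrite -(pmulr_lgt0 _ (w_gt0 1%N)).
exact: lt_le_trans (w_gt0 0%N) (w_le 0%N).
Qed.

Section Fmap_contraction.
Variables (R : realType) (X U : Type) (d : X -> X -> R) (f : X -> U -> X).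
Variables (w : nat -> R) (xs : X) (c L : R).
Hypotheses (dm : metric_on [set: X] d) (w_gt0 : forall n, 0 < w n).
Hypotheses (w_le : forall k, w k <= L * w k.+1) (c_ge0 : 0 <= c).
Hypothesis f_contraction : forall x1 x2 u, d (f x1 u) (f x2 u) <= c * d x1 x2.

Let cL_ge0 : 0 <= c * L.
Proof. by rewrite mulr_ge0 // ltW // (weight_ratio_bound_gt0 w_gt0 w_le). Qed.

Lemma wdist_sum_Fmap x y u N :
  wdist_sum w d (Fmap f x u) (Fmap f y u) N <= c * L * wdist_sum w d x y N.+1.
Proof.
rewrite /wdist_sum /series /= big_nat_recl //.
apply: le_trans (_ : _ <= c * L * \sum_(0 <= i < N) w i.+1 * d (x i.+1) (y i.+1)) _.
  rewrite mulr_sumr; apply: ler_sum => i _.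
  apply: le_trans (ler_wpM2l (ltW (w_gt0 i)) (f_contraction _ _ _)) _.
  rewrite (_ : c * L * _ = L * w i.+1 * (c * d (x i.+1) (y i.+1))); last by ring.
  by apply: ler_wpM2r; [rewrite mulr_ge0 ?(metric_ge0 dm) | exact: w_le].
apply: (ler_wpM2l cL_ge0); rewrite lerDr.
exact: mulr_ge0 (ltW (w_gt0 0%N)) (metric_ge0 dm _ _).
Qed.

Lemma dXbar_Fmap x y u : in_Xbar w d xs x -> in_Xbar w d xs y ->
  dXbar w d (Fmap f x u) (Fmap f y u) <= c * L * dXbar w d x y.
Proof.
move=> Xx Xy; apply: dXbar_le => // N; apply: le_trans (wdist_sum_Fmap _ _ _ N) _.
apply: (ler_wpM2l cL_ge0); exact: (wdist_sum_le_dXbar dm w_gt0 Xx Xy N.+1).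
Qed.

Lemma dXbar_Fmap_fixpoint x x0 u :
  in_Xbar w d xs x -> in_Xbar w d xs x0 -> in_Xbar w d xs (Fmap f x0 u) ->
  x = Fmap f x u -> (1 - c * L) * dXbar w d x x0 <= dXbar w d (Fmap f x0 u) x0.
Proof.
move=> Xx X0 XF0 x_fix.
have contr : dXbar w d x (Fmap f x0 u) <= c * L * dXbar w d x x0.
  by rewrite {1}x_fix; exact: dXbar_Fmap.
rewrite mulrBl mul1r lerBlDr.
apply: le_trans (dXbar_triangle dm w_gt0 Xx XF0 X0) _.
by rewrite [leLHS]addrC lerD2l.
Qed.

Hypothesis cL_lt1 : c * L < 1.

Lemma Fmap_fixpoint_unique x y u : in_Xbar w d xs x -> in_Xbar w d xs y ->
  x = Fmap f x u -> y = Fmap f y u -> x = y.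
Proof.
move=> Xx Xy x_fix y_fix; apply: (dXbar_le0 dm w_gt0 Xx Xy).
have := dXbar_Fmap_fixpoint Xx Xy _ x_fix.
rewrite -y_fix (dXbar_xx _ dm) => /(_ Xy).
by rewrite pmulr_rle0 // subr_gt0.
Qed.

Section fixpoint.
Variable u : nat -> U.
Hypotheses (dc : complete_on [set: X] d)
  (F_Xbar : forall x, in_Xbar w d xs x -> in_Xbar w d xs (Fmap f x u)).

Let iterate k := iter k (Fmap f ^~ u) (fun=> xs).
Let D1 := dXbar w d (iterate 1) (iterate 0).

Let cL_range : 0 <= c * L < 1.
Proof. by rewrite cL_ge0. Qed.

Let cL_neq1 : 1 - c * L != 0.
Proof. by rewrite subr_eq0 eq_sym lt_eqF. Qed.

Let in_Xbar_iterate k : in_Xbar w d xs (iterate k).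
Proof. by elim: k => [|k IH]; [exact: in_Xbar_cst | exact: F_Xbar]. Qed.

Let D1_ge0 : 0 <= D1.
Proof. exact: dXbar_ge0. Qed.

Let dXbar_iterate_succ k :
  dXbar w d (iterate k.+1) (iterate k) <= D1 * (c * L) ^+ k.
Proof.
elim: k => [|k IH]; first by rewrite expr0 mulr1.
have -> : iterate k.+2 = Fmap f (iterate k.+1) u by [].
apply: le_trans (dXbar_Fmap _ (in_Xbar_iterate _) (in_Xbar_iterate _)) _.
by rewrite exprS mulrCA; apply: (ler_wpM2l cL_ge0).
Qed.

Let dXbar_iterate_le k : dXbar w d (iterate k) (iterate 0) <= D1 / (1 - c * L).
Proof.
case: k => [|k].
  by rewrite (dXbar_xx _ dm) divr_ge0 // subr_ge0 ltW.
rewrite (dXbar_sym _ dm) -[D1]mulr1 -(expr0 (c * L)).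
apply: (geometric_cauchy cL_range D1_ge0) => // [i j l|i].
  exact: dXbar_triangle.
by rewrite (dXbar_sym _ dm).
Qed.

Let iterate_coord_limit : exists x : nat -> X, forall n k,
  d (iterate k n) (x n) <= D1 / w n * (c * L) ^+ k / (1 - c * L).
Proof.
suff /choice[x x_lim] : forall n, exists l, forall k,
  d (iterate k n) l <= D1 / w n * (c * L) ^+ k / (1 - c * L) by exists x.
move=> n; apply: (geometric_limit dm (s := fun k => iterate k n) dc cL_range).
  exact: divr_ge0 D1_ge0 (ltW (w_gt0 n)).
move=> k; rewrite mulrAC ler_pdivlMr // mulrC (metric_sym dm).
by apply: le_trans (dXbar_iterate_succ k); exact: wterm_le_dXbar.
Qed.

Let iterate_limit_fix x :
  (forall n k, d (iterate k n) (x n) <= D1 / w n * (c * L) ^+ k / (1 - c * L)) ->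
  x = Fmap f x u.
Proof.
move=> x_lim; apply: funext => n; apply: (metric_le0 dm).
apply: (le0_geometric cL_range
  (K := (D1 / w n * (c * L) + c * (D1 / w n.+1)) / (1 - c * L))) => k.
apply: le_trans (metric_triangle dm _ (iterate k.+1 n) _) _.
have -> : iterate k.+1 n = f (iterate k n.+1) (u n) by [].
rewrite (metric_sym dm (x n)).
apply: le_trans (lerD (x_lim n k.+1)
  (le_trans (f_contraction _ _ _) (ler_wpM2l c_ge0 (x_lim n.+1 k)))) _.
rewrite le_eqVlt; apply/orP; left; apply/eqP; rewrite exprS; field.
by rewrite cL_neq1 !lt0r_neq0.
Qed.

(* The partial sums of dbar(x, xs) are within N * O((c L)^k) of those of
   dbar(iterate k, xs), which are bounded uniformly in k. *)
Let iterate_limit_in_Xbar x :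
  (forall n k, d (iterate k n) (x n) <= D1 / w n * (c * L) ^+ k / (1 - c * L)) ->
  in_Xbar w d xs x.
Proof.
move=> x_lim; apply/(in_XbarP dm w_gt0); exists (D1 / (1 - c * L)) => N.
rewrite -subr_le0.
apply: (le0_geometric cL_range (K := N%:R * (D1 / (1 - c * L)))) => k.
rewrite lerBlDr; apply: le_trans (wdist_sum_triangle dm w_gt0 _ (iterate k) _ _) _.
apply: lerD; last first.
  apply: le_trans (dXbar_iterate_le k).
  exact: (wdist_sum_le_dXbar dm w_gt0 (in_Xbar_iterate k) (in_Xbar_iterate 0) N).
apply: le_trans (_ : _ <= \sum_(0 <= i < N) D1 / (1 - c * L) * (c * L) ^+ k) _.
  apply: ler_sum => i _; rewrite (metric_sym dm).
  apply: le_trans (ler_wpM2l (ltW (w_gt0 i)) (x_lim i k)) _.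
  by rewrite le_eqVlt; apply/orP; left; apply/eqP; field; rewrite cL_neq1 lt0r_neq0.
by rewrite sumr_const_nat subn0 -[in leLHS]mulr_natl mulrA.
Qed.

Lemma Fmap_fixpoint_exists : exists x, in_Xbar w d xs x /\ x = Fmap f x u.
Proof.
have [x x_lim] := iterate_coord_limit.
by exists x; split; [exact: iterate_limit_in_Xbar | exact: iterate_limit_fix].
Qed.

End fixpoint.
End Fmap_contraction.

Lemma proj_nbhs (T : topologicalType) (x : {ptws nat -> T}) n (B : set T) :
  nbhs (x n) B -> nbhs x [set y : {ptws nat -> T} | B (y n)].
Proof. exact: (@proj_continuous nat (fun=> T) n x B). Qed.

Section metric_topology.
Variables (R : realType) (X : topologicalType) (d : X -> X -> R).
Hypotheses (dm : metric_on [set: X] d) (di : induces_on [set: X] d).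

Lemma nbhs_dball x e : 0 < e -> nbhs x [set y | d x y < e].
Proof.
move=> e_gt0; have [_ ball_nbhs] := @di x I [set y | d x y < e].
have [|N xN N_ball] := ball_nbhs; first by exists e => // y [].
by apply: filterS xN => y Ny; exact: N_ball.
Qed.

Lemma metric_hausdorff : hausdorff_space X.
Proof.
move=> p q pq; apply: (metric_le0 dm); rewrite leNgt; apply/negP => dpq_gt0.
have r_gt0 : 0 < d p q / 2 by rewrite divr_gt0.
have [y [py qy]] := pq _ _ (nbhs_dball p r_gt0) (nbhs_dball q r_gt0).
have := metric_triangle dm p y q; rewrite (metric_sym dm y) leNgt => /negP; apply.
by rewrite [ltRHS](splitr (d p q)) ltrD.
Qed.

Lemma metric_compact_bounded (x0 : X) :
  compact [set: X] -> exists M, forall x y, d x y <= M.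
Proof.
move=> X_compact.
have d_cont : continuous (d x0).
  move=> x; apply/cvgrPdist_lt => e e_gt0; apply: filterS (nbhs_dball x e_gt0).
  move=> y /= dxy; have := metric_triangle dm x0 y x.
  have := metric_triangle dm x0 x y; rewrite (metric_sym dm y x) ltr_distl.
  by move=> ? ?; apply/andP; split; lra.
have /compact_bounded[M [_ M_bnd]] :=
  continuous_compact (continuous_subspaceT d_cont) X_compact.
exists ((M + 1) *+ 2) => x y; apply: le_trans (metric_triangle dm x x0 y) _.
have d_le z : d x0 z <= M + 1.
  have M_lt : M < M + 1 by rewrite ltrDl.
  by apply: le_trans (ler_norm _) (M_bnd _ M_lt _ _); exists z.
by rewrite (metric_sym dm x) mulr2n; apply: lerD.
Qed.

End metric_topology.

Section bounded_metric.
Variables (R : realType) (X : topologicalType) (d : X -> X -> R) (w : nat -> R).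
Variable M : R.
Hypotheses (dm : metric_on [set: X] d) (di : induces_on [set: X] d).
Hypotheses (w_gt0 : forall n, 0 < w n) (w_sum1 : series w @ \oo --> (1 : R)).
Hypothesis d_le : forall x y, d x y <= M.

Let series_w_le1 N : series w N <= 1.
Proof.
rewrite -(cvg_lim _ w_sum1) //.
by apply: nonneg_series_le_lim => [n|]; [exact: ltW | apply/cvg_ex; exists 1].
Qed.

Let weight_tail_le t : 0 < t ->
  exists N0, forall N, \sum_(N0 <= i < N0 + N) w i <= t.
Proof.
move=> t_gt0; have t_lt : 1 - t < 1 by rewrite ltrBlDr ltrDl.
have [N0 _ N0_tail] := cvgr_gt _ w_sum1 (1 - t) t_lt.
exists N0 => N; have := series_w_le1 (N0 + N)%N; have := N0_tail N0 (leqnn N0).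
by rewrite /series /= (@big_cat_nat _ _ _ N0 0 (N0 + N)) ?leq_addr //=; lra.
Qed.

Lemma in_Xbar_bounded xs x : in_Xbar w d xs x.
Proof.
apply/(in_XbarP dm w_gt0); exists M => N.
apply: (@le_trans _ _ (\sum_(0 <= i < N) w i * M)).
  by apply: ler_sum => i _; apply: (ler_wpM2l (ltW (w_gt0 i))).
rewrite -mulr_suml -[leRHS]mul1r; apply: ler_wpM2r (series_w_le1 N).
exact: le_trans (metric_ge0 dm xs xs) (d_le xs xs).
Qed.

Lemma nbhs_ptws_dXbar_ball (x0 : {ptws nat -> X}) e : 0 < e ->
  \forall x \near x0, dXbar w d x x0 < e.
Proof.
move=> e_gt0.
have M_ge0 : 0 <= M := le_trans (metric_ge0 dm _ _) (d_le (x0 0%N) (x0 0%N)).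
have M1_gt0 : 0 < M + 1 by lra.
pose t := e / (4 * (M + 1)).
have t_gt0 : 0 < t by rewrite divr_gt0 // mulr_gt0.
have tM1 : t * (M + 1) = e / 4 by rewrite /t; field; rewrite lt0r_neq0.
have [N0 N0_tail] := weight_tail_le t_gt0.
have near_head :
    nbhs x0 [set x : {ptws nat -> X} | forall i : 'I_N0, d (x0 i) (x i) < e / 2].
  apply: (@filter_forall _ _ (fun (i : 'I_N0) (x : {ptws nat -> X}) =>
    d (x0 i) (x i) < e / 2) _ (nbhs_filter x0)) => i.
  have e2_gt0 : 0 < e / 2 by rewrite divr_gt0.
  exact: (proj_nbhs (nbhs_dball di (x0 i) e2_gt0)).
apply: filterS near_head => x x_near.
apply: (@le_lt_trans _ _ (e / 2 + e / 4)); last by lra.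
apply: dXbar_le => // N.
apply: le_trans (wdist_sum_nondecreasing dm w_gt0 _ _ (leq_addl N0 N)) _.
rewrite /wdist_sum /series /= (@big_cat_nat _ _ _ N0) ?leq_addr //=.
apply: lerD.
  apply: le_trans (_ : _ <= \sum_(0 <= i < N0) w i * (e / 2)) _.
    rewrite big_nat_cond [leRHS]big_nat_cond.
    apply: ler_sum => i /andP[/andP[_ iN0] _].
    apply: (ler_wpM2l (ltW (w_gt0 i))); rewrite (metric_sym dm).
    exact: ltW (x_near (Ordinal iN0)).
  rewrite -mulr_suml -[leRHS]mul1r; apply: ler_wpM2r (series_w_le1 N0).
  by rewrite divr_ge0 // ltW.
apply: le_trans (_ : _ <= \sum_(N0 <= i < N0 + N) w i * (M + 1)) _.
  apply: ler_sum => i _; apply: (ler_wpM2l (ltW (w_gt0 i))).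
  by apply: le_trans (d_le _ _) _; rewrite lerDl.
by rewrite -mulr_suml -tM1; apply: ler_wpM2r; [exact: ltW | exact: N0_tail].
Qed.

End bounded_metric.

Section solution_map.
Variables (U X : topologicalType) (f : X -> U -> X).
Variable Uf : {ptws nat -> U} -> {ptws nat -> X}.
Hypotheses (X_hausdorff : hausdorff_space X)
  (f_cont : continuous (fun p : X * U => f p.1 p.2)).
Hypotheses (Uf_fix : forall u, Uf u = Fmap f (Uf u) u)
  (Uf_unique : forall (u : {ptws nat -> U}) x, x = Fmap f x u -> x = Uf u).

Lemma cluster_solution (u0 : {ptws nat -> U}) (p : {ptws nat -> X}) :
  cluster (Uf @ nbhs u0) p -> p = Fmap f p u0.
Proof.
move=> p_cluster; apply: funext => n; apply: X_hausdorff => A B pA fB.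
have [[A' B'] /= [pA' uB'] f_AB] := @f_cont (p n.+1, u0 n) _ fB.
have Uf_near : (Uf @ nbhs u0) (Uf @` [set u | B' (u n)]).
  by apply: filterS (proj_nbhs uB') => u uB; exists u.
have p_near : nbhs p [set x : {ptws nat -> X} | A (x n) /\ A' (x n.+1)].
  by apply: filterI; exact: proj_nbhs.
have [_ [[u uB <-] [UfA UfA']]] := p_cluster _ _ Uf_near p_near.
exists (Uf u n); split => //.
by rewrite Uf_fix; exact: (f_AB (_, _) (conj UfA' uB)).
Qed.

Lemma solution_map_continuous : compact [set: X] -> continuous Uf.
Proof.
move=> X_compact u0.
have ptws_compact : compact [set: {ptws nat -> X}].
  have := tychonoff (fun _ : nat => X_compact).
  by rewrite (_ : [set _ | _] = setT) //; apply/seteqP.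
have Uf_proper : ProperFilter (Uf @ nbhs u0) by exact: fmap_proper_filter.
apply: (compact_cluster_set1 (hausdorff_product (fun=> X_hausdorff))
  ptws_compact filterT Uf_proper filterT).
apply/seteqP; split => [p /cluster_solution /Uf_unique -> //|_ ->].
have [q [_ q_cluster]] := ptws_compact _ Uf_proper filterT.
by rewrite /= -(Uf_unique (cluster_solution q_cluster)).
Qed.

End solution_map.

Definition is_continuous_echo_filter (R : realType) (U X : topologicalType)
    (d : X -> X -> R) (f : X -> U -> X) (w : nat -> R) (xs : X)
    (Ubar : set {ptws nat -> U}) (Uf : {ptws nat -> U} -> (nat -> X)) :=
  (forall u, Ubar u ->
     [/\ in_Xbar w d xs (Uf u), Uf u = Fmap f (Uf u) u
       & forall x, in_Xbar w d xs x -> x = Fmap f x u -> x = Uf u]) /\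
  (forall u0, Ubar u0 -> forall e : R, 0 < e ->
     \forall u \near u0, Ubar u -> dXbar w d (Uf u) (Uf u0) < e).

Lemma echo_filter_compact (R : realType) (U X : topologicalType)
    (d : X -> X -> R) (f : X -> U -> X) (w : nat -> R) (xs : X)
    (Ubar : set {ptws nat -> U}) :
  metric_on [set: X] d -> induces_on [set: X] d ->
  continuous (fun p : X * U => f p.1 p.2) ->
  (forall n, 0 < w n) -> series w @ \oo --> (1 : R) -> compact [set: X] ->
  (forall u : nat -> U, exists! x : nat -> X, forall n, x n = f (x n.+1) (u n)) ->
  exists Uf, is_continuous_echo_filter d f w xs Ubar Uf.
Proof.
move=> dm di f_cont w_gt0 w_sum1 X_compact esp.
have /choice[Uf Uf_spec] : forall u : {ptws nat -> U},
  exists! x : {ptws nat -> X}, forall n, x n = f (x n.+1) (u n) := esp.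
have Uf_fix u : Uf u = Fmap f (Uf u) u.
  by apply: funext => n; have [] := Uf_spec u.
have Uf_unique u x : x = Fmap f x u -> x = Uf u.
  by move=> x_fix; apply/esym/(proj2 (Uf_spec u)) => n; rewrite {1}x_fix.
have [M d_le] := metric_compact_bounded dm di xs X_compact.
exists Uf; split => [u _|u0 _ e e_gt0].
  split=> [||x _]; last exact: Uf_unique.
  - exact: (in_Xbar_bounded dm w_gt0 w_sum1 d_le).
  - exact: Uf_fix.
have Uf_cont : continuous Uf := solution_map_continuous (metric_hausdorff dm di)
  f_cont Uf_fix Uf_unique X_compact.
have : \forall u \near u0, dXbar w d (Uf u) (Uf u0) < e :=
  Uf_cont u0 _ (nbhs_ptws_dXbar_ball dm di w_gt0 w_sum1 d_le (Uf u0) e_gt0).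
by apply: filterS => u.
Qed.

Lemma echo_filter_contraction (R : realType) (U X : topologicalType)
    (d : X -> X -> R) (f : X -> U -> X) (w : nat -> R) (xs : X)
    (Ubar : set {ptws nat -> U}) (c L : R) :
  metric_on [set: X] d -> complete_on [set: X] d -> (forall n, 0 < w n) ->
  (forall k, w k <= L * w k.+1) -> 0 <= c -> c * L < 1 ->
  (forall x1 x2 u, d (f x1 u) (f x2 u) <= c * d x1 x2) ->
  (forall x u, in_Xbar w d xs x -> Ubar u -> in_Xbar w d xs (Fmap f x u)) ->
  (forall x0 u0, in_Xbar w d xs x0 -> Ubar u0 -> forall e : R, 0 < e ->
     \forall u \near u0, Ubar u -> dXbar w d (Fmap f x0 u) (Fmap f x0 u0) < e) ->
  exists Uf, is_continuous_echo_filter d f w xs Ubar Uf.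
Proof.
move=> dm dc w_gt0 w_le c_ge0 cL_lt1 f_contr F_Xbar F_cont.
have solution u : exists x : nat -> X, Ubar u -> in_Xbar w d xs x /\ x = Fmap f x u.
  have [uU|uNU] := pselect (Ubar u); last by exists (fun=> xs) => /uNU.
  have [x x_sol] := Fmap_fixpoint_exists dm w_gt0 w_le c_ge0 f_contr cL_lt1 dc
    (fun x Xx => F_Xbar x u Xx uU).
  by exists x.
have /choice[Uf Uf_spec] := solution.
exists Uf; split => [u uU|u0 u0U e e_gt0].
  have [Xu u_fix] := Uf_spec u uU; split => // x Xx x_fix.
  exact: (Fmap_fixpoint_unique dm w_gt0 w_le c_ge0 f_contr cL_lt1 Xx Xu x_fix).
have [X0 u0_fix] := Uf_spec u0 u0U.
have cL_gt0 : 0 < 1 - c * L by rewrite subr_gt0.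
apply: filterS (F_cont _ _ X0 u0U _ (mulr_gt0 e_gt0 cL_gt0)) => u F_near uU.
have [Xu u_fix] := Uf_spec u uU.
rewrite -(ltr_pM2l cL_gt0); apply: le_lt_trans
  (dXbar_Fmap_fixpoint dm w_gt0 w_le c_ge0 f_contr Xu X0 (F_Xbar _ _ X0 uU) u_fix) _.
by rewrite [in X in _ < X]mulrC {2}u0_fix; exact: F_near.
Qed.

Unset Implicit Arguments. Set Strict Implicit.

Theorem lemmaB6 (R : realType) (Z U X : topologicalType)
  (d : X -> X -> R) (f : X -> U -> X)
  (V : {ptws nat -> Z} -> {ptws nat -> U})
  (w : nat -> R) (xs : X) :
  (* Z, U Polish; (X, d) Polish with complete metric d *)
  polish R Z -> polish R U ->
  metric_on [set: X] d -> induces_on [set: X] d -> complete_on [set: X] d ->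
  separable_on [set: X] ->
  (* f continuous *)
  continuous (fun p : X * U => f p.1 p.2) ->
  (* V continuous and causal; underline U = V(underline Z) Polish *)
  continuous V -> causal V -> polish_on R (range V) ->
  (* the weights *)
  (forall n, 0 < w n < 1) ->
  ((forall n, w n.+1 <= w n) \/ (forall n, w n <= w n.+1)) ->
  series w @ \oo --> (1 : R) ->
  wnorm_finite w ->
  (* standing assumption: F maps Xbar x Ubar into Xbar, continuously *)
  (forall x u, in_Xbar w d xs x -> range V u -> in_Xbar w d xs (Fmap f x u)) ->
  (forall x0 u0, in_Xbar w d xs x0 -> range V u0 ->
     forall e : R, 0 < e -> exists2 delta : R, 0 < delta &
       \forall u \near u0, forall x, in_Xbar w d xs x ->
         dXbar w d x x0 < delta -> range V u ->
         dXbar w d (Fmap f x u) (Fmap f x0 u0) < e) ->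
  (* case (i) or case (ii) *)
  ((compact [set: X] /\
    forall u : nat -> U, exists! x : nat -> X, forall n, x n = f (x n.+1) (u n))
   \/
   (exists c : R, 0 < c < (wnorm w)^-1 /\
      forall x1 x2 u, d (f x1 u) (f x2 u) <= c * d x1 x2)) ->
  (* conclusion: U_f : Ubar -> Xbar exists (unique solution in Xbar) and is
     continuous *)
  exists Uf : {ptws nat -> U} -> (nat -> X),
    (forall u, range V u ->
       [/\ in_Xbar w d xs (Uf u),
           Uf u = Fmap f (Uf u) u
         & forall x, in_Xbar w d xs x -> x = Fmap f x u -> x = Uf u]) /\
    (forall u0, range V u0 -> forall e : R, 0 < e ->
       \forall u \near u0, range V u -> dXbar w d (Uf u) (Uf u0) < e).
Proof.
move=> _ _ dm di dc _ f_cont _ _ _ w_range _ w_sum1 w_fin F_Xbar F_cont.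
have w_gt0 n : 0 < w n by have /andP[] := w_range n.
case=> [[X_compact esp]|[c [/andP[c_gt0 c_lt] f_contr]]].
  exact: echo_filter_compact.
have w_le k : w k <= wnorm w * w k.+1 by exact: weight_le_wnorm.
have cL_lt1 : c * wnorm w < 1.
  by rewrite -ltr_pdivlMr ?div1r // (weight_ratio_bound_gt0 w_gt0 w_le).
apply: (echo_filter_contraction dm dc w_gt0 w_le (ltW c_gt0) cL_lt1 f_contr F_Xbar).
move=> x0 u0 X0 u0U e e_gt0.
have [delta delta_gt0 F_near] := F_cont x0 u0 X0 u0U e e_gt0.
apply: filterS F_near => u F_near uU; apply: F_near => //.
by rewrite (dXbar_xx _ dm).
Qed.
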